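(* Let $I\subset K[x_1,\ldots,x_n]$ be a monomial ideal which is componentwise polymatroidal with strong exchange property. Then $I$ has linear quotients.
   Context: $G(I)$ = minimal monomial generating set; $\deg_{x_i}(u)$ = exponent of $x_i$ in $u$. A monomial ideal generated in a single degree is polymatroidal if for all $u,v\in G(I)$ and all $i$ with $\deg_{x_i}(u)>\deg_{x_i}(v)$ there exists $j$ with $\deg_{x_j}(u)<\deg_{x_j}(v)$ and $x_j(u/x_i)\in I$. A polymatroidal ideal $I$ satisfies the strong exchange property if for all $u,v\in G(I)$ and all $i,j$ with $\deg_{x_i}(u)>\deg_{x_i}(v)$ and $\deg_{x_j}(u)<\deg_{x_j}(v)$, one has $x_j(u/x_i)\in I$. $I_{\langle j\rangle}$ is the ideal generated by all degree-$j$ monomials in $I$; $I$ is componentwise polymatroidal with strong exchange property if every nonzero $I_{\langle j\rangle}$ is polymatroidal with the strong exchange property. A monomial ideal has linear quotients if there is an ordering $v_1,\ldots,v_r$ of $G(I)$ such that each $(v_1,\ldots,v_{i-1}):v_i$, $i\ge 2$, is generated by a subset of the variables. *)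

(* Monomial ideals in K[x_1,...,x_n] are treated
   combinatorially: a monomial is its exponent vector, and a monomial
   ideal is determined by the set of monomials it contains. *)
From mathcomp Require Import all_boot.
Set Implicit Arguments. Unset Strict Implicit. Unset Printing Implicit Defensive.

Definition mon (n : nat) := {ffun 'I_n -> nat}.

Definition mdvd n (u v : mon n) : bool := [forall i, u i <= v i].

Definition mmul n (u v : mon n) : mon n := [ffun i => u i + v i].

Definition mdeg n (u : mon n) : nat := \sum_(i < n) u i.

(* x_j (u / x_i)  (used only when x_i divides u) *)
Definition mexch n (u : mon n) (i j : 'I_n) : mon n :=
  [ffun l => (u l - (l == i)) + (l == j)].

(* the monomial ideal generated by the monomials satisfying S:
   its monomials are those divisible by some element of S *)
Definition in_mideal n (S : mon n -> Prop) (u : mon n) : Prop :=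
  exists2 g, S g & mdvd g u.

Definition gens_pred n (gens : seq (mon n)) : mon n -> Prop :=
  fun g => g \in gens.

(* u belongs to G(J), the minimal monomial generating set of J *)
Definition in_mingens n (S : mon n -> Prop) (u : mon n) : Prop :=
  in_mideal S u /\
  (forall w, in_mideal S w -> mdvd w u -> w = u).

(* generators of I_<j>: all degree-j monomials of I *)
Definition comp_gens n (S : mon n -> Prop) (j : nat) : mon n -> Prop :=
  fun u => in_mideal S u /\ mdeg u = j.

Definition single_degree n (S : mon n -> Prop) : Prop :=
  exists d, forall u, in_mingens S u -> mdeg u = d.

Definition polymatroidal n (S : mon n -> Prop) : Prop :=
  single_degree S /\
  forall u v, in_mingens S u -> in_mingens S v ->
  forall i : 'I_n, v i < u i ->
  exists j : 'I_n, u j < v j /\ in_mideal S (mexch u i j).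

Definition polymatroidal_SEP n (S : mon n -> Prop) : Prop :=
  polymatroidal S /\
  forall u v, in_mingens S u -> in_mingens S v ->
  forall i j : 'I_n, v i < u i -> u j < v j ->
  in_mideal S (mexch u i j).

Definition comp_polymatroidal_SEP n (S : mon n -> Prop) : Prop :=
  forall j : nat, (exists u, comp_gens S j u) ->
  polymatroidal_SEP (comp_gens S j).

(* the ideal generated by the variables x_k, k in V *)
Definition in_var_ideal n (V : {set 'I_n}) (w : mon n) : Prop :=
  exists2 k, k \in V & 0 < w k.

(* linear quotients: an ordering v_1..v_r of G(I) such that each colon
   (v_1,...,v_{i-1}) : v_i, i >= 2, is generated by a set of variables.
   The colon ideal J : v consists of the monomials w with w v in J. *)
Definition linear_quotients n (S : mon n -> Prop) : Prop :=
  exists s : seq (mon n),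
    [/\ uniq s,
        (forall u, u \in s <-> in_mingens S u) &
        forall i, 0 < i < size s ->
          exists V : {set 'I_n}, forall w : mon n,
            in_mideal (gens_pred (take i s)) (mmul w (nth [ffun=> 0] s i))
            <-> in_var_ideal V w].

(** [linear_quotients_of_order] reduces linear quotients to an exchange
  property of an order on G(I): whenever a generator b precedes v, some x_k
  dividing b/gcd(b,v) has x_k v divisible by a generator preceding v; the
  colon ideal at v is then generated by these variables.

  Every nonzero component I_<d> of I is of Veronese type: it consists of all
  monomials of degree d whose exponents lie in a box [lo, hi]
  ([component_box]); this follows from iterated strong exchanges.  The
  l1-distance [Pot] of a degree-d generator from the box of I_<d-1> measures
  how far it is from the part of I generated in lower degree.  We order G(I)
  by degree, then by this potential ([gpot]), then lexicographically
  ([lekey]), and prove the exchange property: for b of the same degree as v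
  a strong exchange x_k (v / x_i) lowers the potential or keeps it and goes
  down lexicographically ([pot_step], [earlier_same_degree]); for b of
  smaller degree, b is first lifted to a multiple c of degree deg v dividing
  lcm(b,v), which lies at distance at most 1 from the box while v lies at
  distance at least 2 ([earlier_lower_degree]). *)

From mathcomp Require Import all_boot zify.
From Stdlib Require Import Classical ClassicalEpsilon.

Set Implicit Arguments. Unset Strict Implicit. Unset Printing Implicit Defensive.

Lemma sum_pointwise_eq n (f g h k : 'I_n -> nat) :
  (forall l, f l + g l = h l + k l) ->
  \sum_(l < n) f l + \sum_(l < n) g l = \sum_(l < n) h l + \sum_(l < n) k l.
Proof. by move=> H; rewrite -!big_split; apply: eq_bigr => l _; apply: H. Qed.

Lemma sum_pointwise_le n (f g h k : 'I_n -> nat) :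
  (forall l, h l + k l <= f l + g l) ->
  \sum_(l < n) h l + \sum_(l < n) k l <= \sum_(l < n) f l + \sum_(l < n) g l.
Proof. by move=> H; rewrite -!big_split; apply: leq_sum => l _; apply: H. Qed.

Lemma sum_delta n (i : 'I_n) (F : 'I_n -> nat) :
  \sum_(l < n) ((l == i) * F l) = F i.
Proof. by rewrite (bigD1 i) //= eqxx mul1n big1 ?addn0 // => l /negbTE ->. Qed.

Lemma sum_indicator n (i : 'I_n) : \sum_(l < n) nat_of_bool (l == i) = 1.
Proof. by rewrite -[RHS](sum_delta i (fun=> 1)); apply: eq_bigr => l _; rewrite muln1. Qed.

Lemma leq_sum_term n (f : 'I_n -> nat) (a : 'I_n) : f a <= \sum_(l < n) f l.
Proof. by rewrite (bigD1 a) //= leq_addr. Qed.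

Lemma leq_sum_two_terms n (f : 'I_n -> nat) (a b : 'I_n) : a != b ->
  f a + f b <= \sum_(l < n) f l.
Proof.
move=> ab; rewrite (bigD1 a) //= (bigD1 b) /=; last by rewrite eq_sym ab.
by rewrite addnA leq_addr.
Qed.

Lemma sum_gt0_term n (f : 'I_n -> nat) : 0 < \sum_(l < n) f l -> exists l, 0 < f l.
Proof.
move=> H; case: (boolP [exists l, 0 < f l]) => [/existsP //|/existsPn Hn].
by move: H; rewrite big1 // => l _; move: (Hn l); rewrite lt0n negbK => /eqP.
Qed.

Definition unitm n (k : 'I_n) : mon n := [ffun j => nat_of_bool (j == k)].
Definition mlcm n (u v : mon n) : mon n := [ffun j => maxn (u j) (v j)].

(* v / x_l (used only when x_l divides v). *)
Definition mdrop n (v : mon n) (l : 'I_n) : mon n := [ffun j => v j - (j == l)].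

Lemma unitmE n (k l : 'I_n) : unitm k l = (l == k).
Proof. by rewrite ffunE. Qed.
Lemma mmulE n (u v : mon n) l : mmul u v l = u l + v l.
Proof. by rewrite ffunE. Qed.
Lemma mexchE n (u : mon n) i j l : mexch u i j l = (u l - (l == i)) + (l == j).
Proof. by rewrite ffunE. Qed.
Lemma mlcmE n (u v : mon n) j : mlcm u v j = maxn (u j) (v j).
Proof. by rewrite ffunE. Qed.
Lemma mdropE n (v : mon n) l j : mdrop v l j = v j - (j == l).
Proof. by rewrite ffunE. Qed.

Lemma mdvdP n (u v : mon n) : reflect (forall i, u i <= v i) (mdvd u v).
Proof. exact: forallP. Qed.

Lemma mdvd_refl n (u : mon n) : mdvd u u.
Proof. by apply/mdvdP. Qed.

Lemma mdvd_trans n (u v w : mon n) : mdvd u v -> mdvd v w -> mdvd u w.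
Proof. by move=> /mdvdP H1 /mdvdP H2; apply/mdvdP => i; apply: leq_trans (H1 i) (H2 i). Qed.

Lemma mdvd_anti n (u v : mon n) : mdvd u v -> mdvd v u -> u = v.
Proof. by move=> /mdvdP H1 /mdvdP H2; apply/ffunP => i; apply/anti_leq; rewrite H1 H2. Qed.

Lemma mdvd_lcml n (u v : mon n) : mdvd u (mlcm u v).
Proof. by apply/mdvdP => j; rewrite mlcmE leq_maxl. Qed.
Lemma mdvd_lcmr n (u v : mon n) : mdvd v (mlcm u v).
Proof. by apply/mdvdP => j; rewrite mlcmE leq_maxr. Qed.

Lemma mdvd_exch_mul n (v : mon n) i k : mdvd (mexch v i k) (mmul (unitm k) v).
Proof.
apply/mdvdP => l; rewrite mexchE mmulE unitmE.
by case: (l == i); case: (l == k) => /=; lia.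
Qed.

Lemma mdvd_mdrop n (v : mon n) l : mdvd (mdrop v l) v.
Proof. by apply/mdvdP => j; rewrite mdropE leq_subr. Qed.

Lemma mdeg_mdrop n (v : mon n) l : 0 < v l -> mdeg (mdrop v l) = (mdeg v).-1.
Proof.
move=> Hl.
have E : \sum_(j < n) mdrop v l j + \sum_(j < n) nat_of_bool (j == l) =
         \sum_(j < n) v j + \sum_(j < n) 0.
  by apply: sum_pointwise_eq => j; rewrite mdropE; case: (eqVneq j l) => [->|_] /=; lia.
by move: E; rewrite sum_indicator big1_eq /mdeg; lia.
Qed.

Lemma coord_le_deg n (y : mon n) j : y j <= mdeg y.
Proof. exact: (leq_sum_term (fun l => y l) j). Qed.

Lemma mdeg_mdvd n (u v : mon n) : mdvd u v -> mdeg u <= mdeg v.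
Proof. by move=> /mdvdP H; apply: leq_sum => i _; apply: H. Qed.

Lemma mdvd_eqdeg n (u v : mon n) : mdvd u v -> mdeg v <= mdeg u -> u = v.
Proof.
move=> /mdvdP H Hd; apply/ffunP => i.
have E : \sum_(l < n) u l + \sum_(l < n) (v l - u l) =
         \sum_(l < n) v l + \sum_(l < n) 0.
  by apply: sum_pointwise_eq => l; move: (H l); lia.
have /eqP : \sum_(l < n) (v l - u l) = 0 by move: Hd E; rewrite big1_eq /mdeg; lia.
rewrite sum_nat_eq0 => /forallP /(_ i) /=; rewrite subn_eq0 => Hvu.
by apply/anti_leq; rewrite H Hvu.
Qed.

Lemma mdeg_lt n (u v : mon n) : mdvd u v -> u != v -> mdeg u < mdeg v.
Proof.
move=> H Hne; rewrite ltnNge; apply/negP => Hd.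
by move: Hne; rewrite (mdvd_eqdeg H Hd) eqxx.
Qed.

Lemma mdeg_mexch n (u : mon n) i j : 0 < u i -> mdeg (mexch u i j) = mdeg u.
Proof.
move=> Hi.
have E : \sum_(l < n) mexch u i j l + \sum_(l < n) nat_of_bool (l == i) =
         \sum_(l < n) u l + \sum_(l < n) nat_of_bool (l == j).
  apply: sum_pointwise_eq => l; rewrite mexchE.
  by case: (l == j); case: (eqVneq l i) => [->|_] /=; lia.
by move: E; rewrite !sum_indicator /mdeg; lia.
Qed.

Lemma mdeg_mul_unitm n (k : 'I_n) (u : mon n) : mdeg (mmul (unitm k) u) = (mdeg u).+1.
Proof.
rewrite /mdeg -add1n -(sum_indicator k) -big_split.
by apply: eq_bigr => l _; rewrite mmulE unitmE.
Qed.

Lemma excess_sym n (b v : mon n) : mdeg b = mdeg v ->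
  \sum_(j < n) (b j - v j) = \sum_(j < n) (v j - b j).
Proof.
move=> Hd.
have E : \sum_(j < n) b j + \sum_(j < n) (v j - b j) =
         \sum_(j < n) v j + \sum_(j < n) (b j - v j).
  by apply: sum_pointwise_eq => l; lia.
by move: E Hd; rewrite /mdeg; lia.
Qed.

Lemma exists_deficit n (b v : mon n) (k : 'I_n) : mdeg b = mdeg v -> v k < b k ->
  exists i, b i < v i.
Proof.
move=> Hd Hk.
have /sum_gt0_term [i Hi] : 0 < \sum_(l < n) (v l - b l).
  by rewrite -(excess_sym Hd); apply: leq_trans (leq_sum_term _ k); move: Hk; lia.
by exists i; move: Hi; lia.
Qed.

Lemma mdvd_interpolate n (g x : mon n) D : mdvd g x -> mdeg g <= D -> D <= mdeg x ->
  exists c, [/\ mdvd g c, mdvd c x & mdeg c = D].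
Proof.
move=> Hgx Hg Hx; move Hm : (D - mdeg g) => m.
elim: m g Hgx Hg Hm => [|m IH] g Hgx Hg Hm.
  by exists g; split=> //; [exact: mdvd_refl | move: Hm Hg; lia].
have [j Hj] : exists j, g j < x j.
  case: (boolP [exists j, g j < x j]) => [/existsP //|/existsPn Hn].
  have Hxg : mdvd x g by apply/mdvdP => j; move: (Hn j); rewrite -leqNgt.
  by move: (mdeg_mdvd Hxg) Hm Hx; lia.
have Hgg' : mdvd g (mmul (unitm j) g) by apply/mdvdP => l; rewrite mmulE leq_addl.
have Hg'x : mdvd (mmul (unitm j) g) x.
  apply/mdvdP => l; rewrite mmulE unitmE.
  by case: (eqVneq l j) => [->|_] /=; [rewrite add1n | rewrite add0n; move/mdvdP: Hgx].
have [||c [H1 H2 H3]] := IH _ Hg'x; rewrite ?mdeg_mul_unitm; try by move: Hm; lia.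
by exists c; split=> //; apply: mdvd_trans Hgg' H1.
Qed.

Lemma sorted_prefixP (T : eqType) (key : rel T) (s : seq T) (x0 : T) i g :
  reflexive key -> transitive key -> (forall u v, key u v -> key v u -> u = v) ->
  sorted key s -> uniq s -> i < size s ->
  g \in take i s <-> [/\ g \in s, key g (nth x0 s i) & g != nth x0 s i].
Proof.
move=> Hrf Htr Hanti Hsorted Huniq Hi.
have Hsize : size (take i s) = i by rewrite size_takel // ltnW.
split => [Hg | [Hg Hgv Hne]].
  have Ht : index g (take i s) < i by move: Hg; rewrite -index_mem Hsize.
  have Eg : nth x0 s (index g (take i s)) = g by rewrite -(nth_take x0 Ht) nth_index.
  have Hts : index g (take i s) < size s by apply: ltn_trans Ht Hi.
  split; first by rewrite -Eg mem_nth.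
    by rewrite -Eg; apply: (sorted_leq_nth Htr Hrf x0 Hsorted) => //; apply: ltnW.
  by rewrite -Eg (nth_uniq x0 Hts Hi Huniq) neq_ltn Ht.
have Eg : nth x0 s (index g s) = g by rewrite nth_index.
have Hts : index g s < size s by rewrite index_mem.
case: (ltnP (index g s) i) => Hti.
  by rewrite -Eg -(nth_take x0 Hti); apply: mem_nth; rewrite Hsize.
have Hvg : key (nth x0 s i) g.
  by rewrite -Eg; apply: (sorted_leq_nth Htr Hrf x0 Hsorted).
by move: Hne; rewrite (Hanti _ _ Hgv Hvg) eqxx.
Qed.

Definition inI n (gens : seq (mon n)) (u : mon n) : bool := has (fun g => mdvd g u) gens.

Definition ismin n (gens : seq (mon n)) (u : mon n) : bool :=
  (u \in gens) && all (fun g => mdvd g u ==> (g == u)) gens.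

Section FinitelyGenerated.

Variables (n : nat) (gens : seq (mon n)).

Lemma inIP u : in_mideal (gens_pred gens) u <-> inI gens u.
Proof. by split; [case=> g Hg Hd; apply/hasP; exists g | case/hasP=> g Hg Hd; exists g]. Qed.

Lemma inI_mdvd u w : inI gens u -> mdvd u w -> inI gens w.
Proof. by case/hasP=> g Hg Hd Huw; apply/hasP; exists g => //; apply: mdvd_trans Hd Huw. Qed.

Lemma isminP u : in_mingens (gens_pred gens) u <-> ismin gens u.
Proof.
split.
  case=> /inIP /hasP [g Hg Hgu] Hmin.
  have Eg : g = u by apply: Hmin => //; exists g => //; exact: mdvd_refl.
  apply/andP; split; first by rewrite -Eg.
  apply/allP => g' Hg'; apply/implyP => Hd; apply/eqP; apply: Hmin => //.
  by exists g' => //; exact: mdvd_refl.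
case/andP=> Hu /allP Hall; split; first by exists u => //; exact: mdvd_refl.
move=> w /inIP /hasP [g Hg Hgw] Hwu.
have Egu : g = u by apply/eqP; move/implyP: (Hall g Hg); apply; apply: mdvd_trans Hgw Hwu.
by apply: mdvd_anti => //; rewrite -Egu.
Qed.

Lemma ismin_inI u : ismin gens u -> inI gens u.
Proof. by case/andP=> Hu _; apply/hasP; exists u => //; exact: mdvd_refl. Qed.

Lemma ismin_min u w : ismin gens u -> inI gens w -> mdvd w u -> w = u.
Proof. by move/isminP => [_ H] /inIP Hw Hd; apply: H. Qed.

Lemma ismin_below u : inI gens u -> exists2 g, ismin gens g & mdvd g u.
Proof.
case/hasP=> g0 Hg0 Hd0.
suff Q m g : g \in gens -> mdeg g <= m -> exists2 h, ismin gens h & mdvd h g.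
  by have [h Hh Hhg] := Q _ g0 Hg0 (leqnn _); exists h => //; apply: mdvd_trans Hhg Hd0.
elim: m g => [|m IH] g Hg Hdeg.
  exists g; last exact: mdvd_refl.
  rewrite /ismin Hg /=; apply/allP=> g' Hg'; apply/implyP => Hd.
  by apply/eqP; apply: mdvd_eqdeg => //; move: Hdeg; lia.
case: (boolP (ismin gens g)) => [Hm|]; first by exists g => //; exact: mdvd_refl.
rewrite /ismin Hg /= => /allPn [g' Hg']; rewrite negb_imply => /andP [Hd Hne].
have [|h Hh Hhg'] := IH g' Hg'; first by move: (mdeg_lt Hd Hne) Hdeg; lia.
by exists h => //; apply: mdvd_trans Hhg' Hd.
Qed.

Lemma component_mingens u d :
  inI gens u -> mdeg u = d -> in_mingens (comp_gens (gens_pred gens) d) u.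
Proof.
move=> Hu Hd; split; first by exists u; [split=> //; exact/inIP | exact: mdvd_refl].
move=> w [g [_ Hgd] Hgw] Hwu.
have Egu : g = u by apply: mdvd_eqdeg; [exact: mdvd_trans Hgw Hwu | rewrite Hgd Hd].
by apply: mdvd_anti => //; rewrite -Egu.
Qed.

Lemma strong_exchange (v b : mon n) (i k : 'I_n) d :
  comp_polymatroidal_SEP (gens_pred gens) ->
  inI gens v -> inI gens b -> mdeg v = d -> mdeg b = d ->
  b i < v i -> v k < b k -> inI gens (mexch v i k).
Proof.
move=> Hsep Hv Hb Hvd Hbd Hi Hk.
have Hne : exists u, comp_gens (gens_pred gens) d u by exists v; split=> //; exact/inIP.
have [_ Hexch] := Hsep d Hne.
have [g [Hg Hgd] Hgw] :=
  Hexch v b (component_mingens Hv Hvd) (component_mingens Hb Hbd) i k Hi Hk.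
have Hdw : mdeg (mexch v i k) = d by rewrite mdeg_mexch //; move: Hi; lia.
have -> : mexch v i k = g by apply/esym/mdvd_eqdeg => //; rewrite Hdw Hgd.
exact/inIP.
Qed.

(** ** Linear quotients from an exchange order *)

Lemma linear_quotients_of_order (key : rel (mon n)) :
  total key -> transitive key ->
  (forall u v, key u v -> key v u -> u = v) ->
  (forall v b, ismin gens v -> ismin gens b -> key b v -> b != v ->
     exists k, v k < b k /\
       exists2 g, [/\ ismin gens g, key g v & g != v] & mdvd g (mmul (unitm k) v)) ->
  linear_quotients (gens_pred gens).
Proof.
move=> Htot Htr Hanti Hexch.
set s := sort key (undup (filter (ismin gens) gens)).
have Hmem u : (u \in s) = ismin gens u.
  by rewrite mem_sort mem_undup mem_filter; case: (boolP (ismin gens u)) => //= /andP [].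
exists s; split; first by rewrite sort_uniq undup_uniq.
  by move=> u; rewrite Hmem; split => /isminP.
move=> i /andP [_ Hi]; set v := nth [ffun=> 0] s i; set E := take i s.
have Hv : ismin gens v by rewrite -Hmem mem_nth.
have HE g : g \in E <-> [/\ ismin gens g, key g v & g != v].
  have Hrf : reflexive key by move=> u; move: (Htot u u); rewrite orbb.
  rewrite -Hmem; apply: sorted_prefixP Hrf Htr Hanti (sort_sorted Htot _) _ Hi.
  by rewrite sort_uniq undup_uniq.
exists [set k : 'I_n | has (fun g => mdvd g (mmul (unitm k) v)) E] => w; split.
  case=> g /HE [Hgm Hkey Hne] Hdvd.
  have [k [Hk [g' /HE Hg' Hg'd]]] := Hexch v g Hv Hgm Hkey Hne.
  exists k; first by rewrite inE; apply/hasP; exists g'.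
  by move/mdvdP: Hdvd => /(_ k); rewrite mmulE; move: Hk; lia.
case=> k; rewrite inE => /hasP [g Hg Hgd] Hwk.
exists g => //; apply: (mdvd_trans Hgd); apply/mdvdP => l; rewrite !mmulE unitmE.
by case: (eqVneq l k) => [->|_] /=; [rewrite leq_add2r | rewrite leq_addl].
Qed.

End FinitelyGenerated.

Definition lexlt n (u v : mon n) : bool :=
  [exists k : 'I_n, (u k < v k) && [forall j : 'I_n, (j < k) ==> (u j == v j)]].

Section Lex.

Variable n : nat.
Implicit Types u v w b : mon n.

Lemma lexltP u v :
  lexlt u v <-> exists k : 'I_n, u k < v k /\ forall j : 'I_n, j < k -> u j = v j.
Proof.
split; first by case/existsP => k /andP [H1 /forallP H2]; exists k;
  split=> // j Hj; move/implyP: (H2 j) => /(_ Hj) /eqP.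
case=> k [H1 H2]; apply/existsP; exists k; rewrite H1 /=; apply/forallP => j.
by apply/implyP => Hj; rewrite H2.
Qed.

Lemma lexlt_asym u v : lexlt u v -> lexlt v u -> False.
Proof.
move=> /lexltP [k1 [A1 B1]] /lexltP [k2 [A2 B2]].
case: (ltngtP k1 k2) => H; first by move: (B2 _ H) A1; lia.
  by move: (B1 _ H) A2; lia.
have E : k1 = k2 by apply: val_inj.
by subst; move: A1 A2; lia.
Qed.

Lemma lexlt_trans u v w : lexlt u v -> lexlt v w -> lexlt u w.
Proof.
move=> /lexltP [k1 [A1 B1]] /lexltP [k2 [A2 B2]]; apply/lexltP.
case: (ltngtP k1 k2) => H.
- exists k1; split; first by rewrite -(B2 _ H).
  by move=> j Hj; rewrite B1 // B2 //; apply: ltn_trans Hj H.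
- exists k2; split; first by rewrite (B1 _ H).
  by move=> j Hj; rewrite B1 ?B2 //; apply: ltn_trans Hj H.
- have E : k1 = k2 by apply: val_inj.
  subst; exists k2; split; first exact: ltn_trans A1 A2.
  by move=> j Hj; rewrite B1 // B2.
Qed.

Lemma lexlt_total u v : u != v -> lexlt u v || lexlt v u.
Proof.
move=> Hne; have [k0 Hk0] : exists k, u k != v k.
  case: (boolP [exists k, u k != v k]) => [/existsP //|/existsPn Hn].
  by case/eqP: Hne; apply/ffunP => k; move: (Hn k); rewrite negbK => /eqP.
case: (@arg_minnP _ k0 (fun k => u k != v k) (fun k : 'I_n => val k) Hk0) => k Hk Hmin.
have Hbefore (j : 'I_n) : j < k -> u j = v j.
  by move=> Hj; apply/eqP; apply: contraTT Hj => Hj; rewrite -leqNgt; apply: Hmin.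
case: (ltngtP (u k) (v k)) => H; last by move: Hk; rewrite H eqxx.
  by apply/orP; left; apply/lexltP; exists k.
by apply/orP; right; apply/lexltP; exists k; split=> // j Hj; rewrite Hbefore.
Qed.

Lemma lexlt_mexch v (i k : 'I_n) : i < k -> 0 < v i -> lexlt (mexch v i k) v.
Proof.
move=> Hik Hv; have Hneq (j j' : 'I_n) : j < j' -> (j == j') = false.
  by move=> H; apply/negbTE; apply/eqP => E; move: H; rewrite E ltnn.
apply/lexltP; exists i; split; first by rewrite mexchE eqxx Hneq //=; move: Hv; lia.
move=> j Hj; rewrite mexchE !Hneq //; last by apply: ltn_trans Hj Hik.
by rewrite subn0 addn0.
Qed.

Lemma lexlt_first_deficit b v : lexlt b v ->
  exists k0 : 'I_n, b k0 < v k0 /\ forall k, v k < b k -> k0 < k.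
Proof.
move=> /lexltP [k0 [H1 H2]]; exists k0; split => // k Hk.
case: (ltngtP k0 k) => // Hc; first by move: (H2 _ Hc) Hk; lia.
have E : k0 = k by apply: val_inj.
by move: H1 Hk; rewrite E; lia.
Qed.

End Lex.

Definition lekey n (PP : mon n -> nat) (u v : mon n) : bool :=
  (mdeg u < mdeg v) || (mdeg u == mdeg v) &&
  ((PP u < PP v) || (PP u == PP v) && ((u == v) || lexlt u v)).

Section KeyOrder.

Variables (n : nat) (PP : mon n -> nat).

Lemma lekeyP u v : lekey PP u v <->
  mdeg u < mdeg v \/
  (mdeg u = mdeg v /\ (PP u < PP v \/ (PP u = PP v /\ (u = v \/ lexlt u v)))).
Proof.
rewrite /lekey; split.
  by case/orP=> [H|/andP [/eqP H1 /orP [H2|/andP [/eqP H3 /orP [/eqP H4|H4]]]]]; tauto.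
case=> [->//|[H1 H]]; rewrite H1 eqxx ltnn /=.
case: H => [->//|[H3 H]]; rewrite H3 eqxx ltnn /=.
by case: H => [->|->]; rewrite ?eqxx ?orbT.
Qed.

Lemma lekey_total : total (lekey PP).
Proof.
move=> u v; rewrite /lekey.
case: (ltngtP (mdeg u) (mdeg v)) => //= Hd; rewrite ?eqxx /=.
case: (ltngtP (PP u) (PP v)) => //= Hp; rewrite ?eqxx ?orbT //=.
case: (eqVneq u v) => [->|Hne]; first by rewrite ?eqxx.
by move: (lexlt_total Hne) => /orP [->|->]; rewrite ?orbT.
Qed.

Lemma lekey_trans : transitive (lekey PP).
Proof.
move=> v u w /lekeyP H1 /lekeyP H2; apply/lekeyP.
case: H1 => [D1|[D1 H1]]; case: H2 => [D2|[D2 H2]]; try (left; lia).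
right; split; first lia.
case: H1 => [P1|[P1 H1]]; case: H2 => [P2|[P2 H2]]; try (left; lia).
right; split; first lia.
case: H1 => [E1|H1]; case: H2 => [E2|H2]; subst; try tauto.
by right; apply: lexlt_trans H1 H2.
Qed.

Lemma lekey_anti u v : lekey PP u v -> lekey PP v u -> u = v.
Proof.
move=> /lekeyP H1 /lekeyP H2.
case: H1 => [D1|[D1 H1]]; case: H2 => [D2|[D2 H2]]; try lia.
case: H1 => [P1|[P1 H1]]; case: H2 => [P2|[P2 H2]]; try lia.
case: H1 => [//|H1]; case: H2 => [//|H2].
by case: (lexlt_asym H1 H2).
Qed.

End KeyOrder.

(** ** Components are of Veronese type *)

(* The least natural number satisfying Q, or 0 if there is none. *)
Definition least (Q : nat -> Prop) : nat :=
  match excluded_middle_informative (exists t, Q t /\ forall s, Q s -> t <= s) with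
  | left H => proj1_sig (constructive_indefinite_description _ H)
  | right _ => 0
  end.

Lemma leastP (Q : nat -> Prop) t0 : Q t0 -> Q (least Q) /\ forall s, Q s -> least Q <= s.
Proof.
move=> Q0; rewrite /least; case: excluded_middle_informative => [H|[]].
  exact: proj2_sig (constructive_indefinite_description _ H).
elim/ltn_ind: t0 Q0 => t IH Qt.
case: (classic (exists s, s < t /\ Q s)) => [[s [Hs Qs]]|Hn]; first exact: (IH s).
exists t; split => // s Qs; rewrite leqNgt; apply/negP => Hs; apply: Hn; by exists s.
Qed.

Lemma least_none (Q : nat -> Prop) : (forall t, ~ Q t) -> least Q = 0.
Proof.
move=> H; rewrite /least; case: excluded_middle_informative => // H1.
by exfalso; case: H1 => t [Qt _]; case: (H t).
Qed.

Section Components.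

Variables (n : nat) (gens : seq (mon n)) (d : nat).

Definition comp_mem (y : mon n) : Prop := inI gens y /\ mdeg y = d.

(* The smallest and the largest exponent of x_j among the monomials of I_<d>. *)
Definition lo (j : 'I_n) : nat := least (fun t => exists2 y, comp_mem y & y j = t).
Definition hi (j : 'I_n) : nat := least (fun t => forall y, comp_mem y -> y j <= t).

Lemma lo_le y j : comp_mem y -> lo j <= y j.
Proof.
move=> Hy; have [_] :=
  @leastP (fun t => exists2 y, comp_mem y & y j = t) _ (ex_intro2 _ _ y Hy erefl).
by apply; exists y.
Qed.

Lemma lo_attained y0 j : comp_mem y0 -> exists2 z, comp_mem z & z j = lo j.
Proof.
move=> Hy0.
by case: (@leastP (fun t => exists2 y, comp_mem y & y j = t) _ (ex_intro2 _ _ y0 Hy0 erefl)).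
Qed.

Lemma hi_spec j : (forall y, comp_mem y -> y j <= hi j) /\
  forall s, (forall y, comp_mem y -> y j <= s) -> hi j <= s.
Proof. by apply: (@leastP _ d) => y [_ <-]; apply: coord_le_deg. Qed.

Lemma hi_ge y j : comp_mem y -> y j <= hi j.
Proof. by case: (hi_spec j) => H _; apply: H. Qed.

Lemma hi_attained y0 j : comp_mem y0 -> exists2 z, comp_mem z & z j = hi j.
Proof.
move=> Hy0; have [Hge Hleast] := hi_spec j; apply: NNPP => Hn.
have Hlt z : comp_mem z -> z j < hi j.
  by move=> Hz; rewrite ltn_neqAle Hge // andbT; apply/eqP => E; apply: Hn; exists z.
have : hi j <= (hi j).-1 by apply: Hleast => z /Hlt; lia.
by move: (Hlt y0 Hy0); lia.
Qed.

Lemma lo_le_hi j : lo j <= hi j.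
Proof.
case: (classic (exists y, comp_mem y)) => [[y Hy]|Hn].
  exact: leq_trans (lo_le j Hy) (hi_ge j Hy).
by rewrite /lo least_none // => t [y Hy _]; apply: Hn; exists y.
Qed.

Hypothesis Hsep : comp_polymatroidal_SEP (gens_pred gens).

(* A unit of exponent may be moved in y from x_i to x_k as soon as some
   monomial z of I_<d> exceeds y at k and some z' falls short of y at i;
   by induction on z_i, z is moved towards y by strong exchanges with z'. *)
Lemma exchange_two_partners (y z z' : mon n) (i k : 'I_n) :
  comp_mem y -> comp_mem z -> comp_mem z' ->
  i != k -> y k < z k -> z' i < y i -> inI gens (mexch y i k).
Proof.
move=> [Hy Hyd] Hz [Hz' Hz'd] Hik Hk Hi.
move Hm : (z i) => m; elim/ltn_ind: m z Hz Hk Hm => m IH z [Hz Hzd] Hk Hm.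
case: (ltnP (z i) (y i)) => Hzi; first exact: (strong_exchange Hsep Hy Hz Hyd Hzd Hzi Hk).
case: (ltnP (y k) (z' k)) => Hz'k; first exact: (strong_exchange Hsep Hy Hz' Hyd Hz'd Hi Hz'k).
have Hzz' : z' i < z i by move: Hi Hzi; lia.
have [j Hj] := exists_deficit (etrans Hzd (esym Hz'd)) Hzz'.
have Hjk : (k == j) = false by apply/negbTE/eqP => E; move: Hj Hz'k Hk; rewrite -E; lia.
have Hji : (i == j) = false by apply/negbTE/eqP => E; move: Hj Hzz'; rewrite -E; lia.
have Hki : (k == i) = false by apply/negbTE; rewrite eq_sym.
have Hz1 : inI gens (mexch z i j) := strong_exchange Hsep Hz Hz' Hzd Hz'd Hzz' Hj.
have Hz1d : mdeg (mexch z i j) = d by rewrite mdeg_mexch //; move: Hzz'; lia.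
apply: (IH (mexch z i j i) _ (mexch z i j)) => //.
- by rewrite mexchE eqxx Hji -Hm /=; move: Hzz'; lia.
- by rewrite mexchE Hki Hjk /= subn0 addn0.
Qed.

(* Exchanges move an
   element y of I_<d> towards x, decreasing the l1-distance by 2. *)
Lemma component_box (x y0 : mon n) : comp_mem y0 -> mdeg x = d ->
  (forall j, lo j <= x j) -> (forall j, x j <= hi j) -> inI gens x.
Proof.
move=> Hy0 Hxd Hlo Hhi; move Hm : (\sum_(j < n) ((x j - y0 j) + (y0 j - x j))) => m.
elim/ltn_ind: m y0 Hy0 Hm => m IH y Hy Hm; have [HyI Hyd] := Hy.
case: (boolP [exists k, y k < x k]) => [/existsP [k Hk]|/existsPn Hn]; last first.
  have Hxy : mdvd x y by apply/mdvdP => j; move: (Hn j); rewrite -leqNgt.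
  by rewrite (mdvd_eqdeg Hxy) // Hxd Hyd.
have [i Hi] := exists_deficit (etrans Hxd (esym Hyd)) Hk.
have Hik : i != k by apply/eqP => E; move: Hi Hk; rewrite E; lia.
have [z Hz Ez] := hi_attained k Hy; have [z' Hz' Ez'] := lo_attained i Hy.
have Hzk : y k < z k by rewrite Ez; apply: leq_trans Hk (Hhi k).
have Hz'i : z' i < y i by rewrite Ez'; apply: leq_ltn_trans (Hlo i) Hi.
have Hy1 := exchange_two_partners Hy Hz Hz' Hik Hzk Hz'i.
have Hy1d : mdeg (mexch y i k) = d by rewrite mdeg_mexch //; move: Hi; lia.
apply: (IH _ _ (mexch y i k) (conj Hy1 Hy1d) erefl).
have E : \sum_(l < n) ((x l - mexch y i k l) + (mexch y i k l - x l)) +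
         \sum_(l < n) (nat_of_bool (l == k) + nat_of_bool (l == i)) =
         \sum_(l < n) ((x l - y l) + (y l - x l)) + \sum_(l < n) 0.
  apply: sum_pointwise_eq => l; rewrite mexchE.
  have [Elk|Hlk] := eqVneq l k; have [Eli|Hli] := eqVneq l i.
  - by move: Hik; rewrite -Eli Elk eqxx.
  - by rewrite Elk /=; move: Hk; lia.
  - by rewrite Eli /=; move: Hi; lia.
  - by rewrite /=; lia.
have S2 : \sum_(l < n) (nat_of_bool (l == k) + nat_of_bool (l == i)) = 2.
  by rewrite big_split /= !sum_indicator.
by move: E Hm; rewrite S2 big1_eq; lia.
Qed.

End Components.

(** ** The potential: distance from a box *)

Section Potential.

Variables (n : nat) (lo hi : 'I_n -> nat).
Hypothesis lo_le_hi : forall j, lo j <= hi j.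

Definition fpot (j : 'I_n) (t : nat) : nat := (lo j - t) + (t - hi j).
Definition Pot (x : mon n) : nat := \sum_(j < n) fpot j (x j).

(* The exchange x_k (v / x_i) lowers the potential, or keeps it and moves
   exponent to a later variable (hence goes down lexicographically). *)
Definition pot_descent (v : mon n) (i k : 'I_n) : Prop :=
  Pot (mexch v i k) < Pot v \/ (Pot (mexch v i k) = Pot v /\ i < k).

(* The exchange only changes the contributions of x_i and x_k. *)
Lemma Pot_mexch (v : mon n) (i k : 'I_n) : i != k -> 0 < v i ->
  Pot (mexch v i k) + fpot k (v k) + fpot i (v i) =
  Pot v + fpot k (v k).+1 + fpot i (v i).-1.
Proof.
move=> Hik Hv.
have E : \sum_(l < n) fpot l (mexch v i k l) +
         \sum_(l < n) ((l == k) * fpot l (v l) + (l == i) * fpot l (v l)) =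
         \sum_(l < n) fpot l (v l) +
         \sum_(l < n) ((l == k) * fpot l (v l).+1 + (l == i) * fpot l (v l).-1).
  apply: sum_pointwise_eq => l; rewrite mexchE.
  have [Elk|Hlk] := eqVneq l k; have [Eli|Hli] := eqVneq l i.
  - by move: Hik; rewrite -Eli Elk eqxx.
  - by rewrite /= ?subn0 ?addn0 ?addn1 ?subn1 ?mul1n ?mul0n ?add0n ?addn0 addnC.
  - by rewrite /= ?subn0 ?addn0 ?addn1 ?subn1 ?mul1n ?mul0n ?add0n ?addn0 addnC.
  - by rewrite /= ?subn0 ?addn0 ?addn1 ?subn1 ?mul1n ?mul0n ?add0n ?addn0.
have sum_two_deltas (F G : 'I_n -> nat) :
    \sum_(l < n) ((l == k) * F l + (l == i) * G l) = F k + G i.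
  by rewrite big_split /= !sum_delta.
by move: E; rewrite !sum_two_deltas /Pot !addnA.
Qed.

Section Step.

Variables b v : mon n.
Hypothesis same_deg : mdeg b = mdeg v.
Hypothesis b_before_v : Pot b < Pot v \/ (Pot b = Pot v /\ lexlt b v).

Let excess_eq := excess_sym same_deg.

Lemma Pot_mexch_at k i : v k < b k -> b i < v i ->
  Pot (mexch v i k) + fpot k (v k) + fpot i (v i) =
  Pot v + fpot k (v k).+1 + fpot i (v i).-1.
Proof.
by move=> Hk Hi; apply: Pot_mexch; [apply/eqP => E; move: Hk Hi; rewrite E; lia | lia].
Qed.

Definition pot_step_exists : Prop :=
  exists k i, [/\ v k < b k, b i < v i & pot_descent v i k].

Lemma pot_step_below_lo k : v k < b k -> v k < lo k -> pot_step_exists.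
Proof.
move=> Hk1 Hk2.
case: (boolP [exists i, (b i < v i) && (lo i < v i)]) =>
    [/existsP [i /andP [Hi1 Hi2]]|/existsPn Hdef].
  exists k, i; split => //; left.
  by move: (Pot_mexch_at Hk1 Hi1) (lo_le_hi k) (lo_le_hi i); rewrite /fpot; lia.
(* otherwise Pot v <= Pot b: b ties with v and precedes it lexicographically,
   and the exchange at the first deficit k0 < k of b keeps the potential *)
have S : \sum_(j < n) fpot j (v j) + \sum_(j < n) (v j - b j) <=
         \sum_(j < n) fpot j (b j) + \sum_(j < n) (b j - v j).
  by apply: sum_pointwise_le => j; move: (Hdef j) (lo_le_hi j); rewrite /fpot; lia.
case: b_before_v => [Hlt|[Heq Hlex]]; first by move: S Hlt; rewrite excess_eq /Pot; lia.
have [k0 [Hk0 Hgt]] := lexlt_first_deficit Hlex.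
exists k, k0; split => //; right; split; last exact: Hgt k Hk1.
by move: (Pot_mexch_at Hk1 Hk0) (Hdef k0) (lo_le_hi k) (lo_le_hi k0); rewrite /fpot; lia.
Qed.

Lemma pot_step_below_hi k : (forall j, v j < b j -> lo j <= v j) ->
  v k < b k -> v k < hi k -> pot_step_exists.
Proof.
move=> Hexc_lo Hk1 Hk2.
case: (boolP [exists i, (b i < v i) && (hi i < v i)]) =>
    [/existsP [i /andP [Hi1 Hi2]]|/existsPn Hdef].
  exists k, i; split => //; left.
  by move: (Pot_mexch_at Hk1 Hi1) (Hexc_lo k) (lo_le_hi k) (lo_le_hi i); rewrite /fpot; lia.
(* otherwise Pot v <= Pot b, so b ties with v; the exchange at the first
   deficit k0 of b keeps the potential unless v k0 <= lo k0, and then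
   Pot v < Pot b *)
have S : Pot v <= Pot b.
  by apply: leq_sum => j _; move: (Hexc_lo j) (Hdef j) (lo_le_hi j); rewrite /fpot; lia.
case: b_before_v => [Hlt|[Heq Hlex]]; first by move: S Hlt; lia.
have [k0 [Hk0 Hgt]] := lexlt_first_deficit Hlex.
case: (boolP (lo k0 < v k0)) => Hk0lo.
  exists k, k0; split => //; right; split; last exact: Hgt k Hk1.
  move: (Pot_mexch_at Hk1 Hk0) (Hexc_lo k) (Hdef k0) (lo_le_hi k) (lo_le_hi k0).
  by rewrite /fpot; lia.
have S2 : \sum_(j < n) fpot j (v j) + \sum_(j < n) nat_of_bool (j == k0) <=
          \sum_(j < n) fpot j (b j) + \sum_(j < n) 0.
  apply: sum_pointwise_le => j; case: (eqVneq j k0) => [->|_] /=.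
    by move: Hk0 Hk0lo (lo_le_hi k0); rewrite /fpot; lia.
  by move: (Hexc_lo j) (Hdef j) (lo_le_hi j); rewrite /fpot; lia.
by move: S2 Heq; rewrite sum_indicator big1_eq /Pot; lia.
Qed.

Lemma pot_step_above_hi : (forall j, v j < b j -> hi j <= v j) -> pot_step_exists.
Proof.
move=> Hexc_hi.
case: (boolP [exists k, [exists i, [&& v k < b k, b i < v i, hi i < v i & i < k]]]) =>
    [/existsP [k /existsP [i /and4P [H1 H2 H3 H4]]]| /existsPn Hno_pair].
  exists k, i; split => //; right; split => //.
  by move: (Pot_mexch_at H1 H2) (Hexc_hi k) (lo_le_hi k) (lo_le_hi i); rewrite /fpot; lia.
(* otherwise comparing potentials forces a tie, and the first deficit k0
   of b, which precedes every excess coordinate, lies below the top of the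
   box; this makes Pot v < Pot b *)
have S : \sum_(j < n) fpot j (v j) + \sum_(j < n) (b j - v j) <=
         \sum_(j < n) fpot j (b j) + \sum_(j < n) ((hi j < v j) * (v j - b j)).
  apply: sum_pointwise_le => j; case: (ltnP (hi j) (v j)) => Hh /=; rewrite ?mul1n ?mul0n;
  by move: (Hexc_hi j) (lo_le_hi j) Hh; rewrite /fpot; lia.
have T : \sum_(j < n) ((hi j < v j) * (v j - b j)) + \sum_(j < n) 0 <=
         \sum_(j < n) (v j - b j) + \sum_(j < n) 0.
  by apply: sum_pointwise_le => j; case: (hi j < v j); rewrite /= ?mul1n ?mul0n; lia.
rewrite !big1_eq !addn0 in T.
case: b_before_v => [Hlt|[Heq Hlex]]; first by move: S T Hlt; rewrite excess_eq /Pot; lia.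
have [k0 [Hk0 Hgt]] := lexlt_first_deficit Hlex.
have [k Hk] := exists_deficit (esym same_deg) Hk0.
have Hk0hi : v k0 <= hi k0.
  rewrite leqNgt; apply/negP => Hh; move: (Hno_pair k) => /existsPn /(_ k0).
  by rewrite Hk Hk0 Hh (Hgt k Hk).
have T2 : \sum_(j < n) ((hi j < v j) * (v j - b j)) + \sum_(j < n) nat_of_bool (j == k0) <=
          \sum_(j < n) (v j - b j) + \sum_(j < n) 0.
  apply: sum_pointwise_le => j; case: (eqVneq j k0) => [->|_];
  by case: (ltnP (hi _) (v _)) => Hh /=; rewrite ?mul1n ?mul0n; lia.
by move: S T2 Heq; rewrite sum_indicator big1_eq excess_eq /Pot; lia.
Qed.

End Step.

Lemma pot_step b v : mdeg b = mdeg v ->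
  Pot b < Pot v \/ (Pot b = Pot v /\ lexlt b v) ->
  exists k i, [/\ v k < b k, b i < v i & pot_descent v i k].
Proof.
move=> Hdeg Hbv.
case: (boolP [exists k, (v k < b k) && (v k < lo k)]) =>
    [/existsP [k /andP [Hk1 Hk2]]|/existsPn Hexc_lo].
  exact: (pot_step_below_lo Hdeg Hbv Hk1 Hk2).
have {}Hexc_lo j : v j < b j -> lo j <= v j.
  by move=> Hj; move: (Hexc_lo j); rewrite Hj /= -leqNgt.
case: (boolP [exists k, (v k < b k) && (v k < hi k)]) =>
    [/existsP [k /andP [Hk1 Hk2]]|/existsPn Hexc_hi].
  exact: (pot_step_below_hi Hdeg Hbv Hexc_lo Hk1 Hk2).
apply: (pot_step_above_hi Hdeg Hbv) => j Hj.
by move: (Hexc_hi j); rewrite Hj /= -leqNgt.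
Qed.

Lemma drop_into_box (v : mon n) :
  (forall j, lo j <= v j) -> Pot v <= 1 ->
  (exists l, lo l < v l) ->
  exists l, 0 < v l /\ forall j, lo j <= mdrop v l j /\ mdrop v l j <= hi j.
Proof.
move=> Hlov Hp [l0 Hl0].
have Hsum : \sum_(j < n) (v j - hi j) <= 1.
  by apply: leq_trans Hp; apply: leq_sum => j _; rewrite /fpot leq_addl.
case: (boolP [exists l, hi l < v l]) => [/existsP [l Hl] | /existsPn Hn].
  exists l; split; first by move: Hl; lia.
  move=> j; rewrite mdropE; case: (eqVneq j l) => [->|Hjl] /=.
    by move: (lo_le_hi l) Hl (leq_trans (leq_sum_term (fun j => v j - hi j) l) Hsum); lia.
  move: (leq_trans (leq_sum_two_terms (fun j => v j - hi j) Hjl) Hsum).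
  by move: (Hlov j) (lo_le_hi j) Hl; lia.
exists l0; split; first by move: Hl0; lia.
move=> j; rewrite mdropE; move: (Hn j) (Hlov j) (lo_le_hi j); rewrite -leqNgt.
by case: (eqVneq j l0) => [->|_] /=; lia.
Qed.

End Potential.

(** ** Exchanges towards earlier generators *)

Definition gpot n (gens : seq (mon n)) (u : mon n) : nat :=
  Pot (lo gens (mdeg u).-1) (hi gens (mdeg u).-1) u.

Section Exchange.

Variables (n : nat) (gens : seq (mon n)).
Hypothesis Hsep : comp_polymatroidal_SEP (gens_pred gens).

Variable v : mon n.
Hypothesis v_min : ismin gens v.

Local Notation blo := (lo gens (mdeg v).-1).
Local Notation bhi := (hi gens (mdeg v).-1).
Local Notation earlier g := [/\ ismin gens g, lekey (gpot gens) g v & g != v].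

(* A descending exchange x_k (v / x_i) lying in I yields a generator
   preceding v and dividing x_k v: the exchange itself if it is a minimal
   generator, and otherwise a minimal generator of smaller degree below it. *)
Lemma earlier_of_descent (i k : 'I_n) : 0 < v i -> i != k ->
  inI gens (mexch v i k) -> pot_descent blo bhi v i k ->
  exists2 g, earlier g & mdvd g (mmul (unitm k) v).
Proof.
move=> Hvi Hik Hw Hdesc; set w := mexch v i k.
have Hwd : mdeg w = mdeg v by rewrite mdeg_mexch.
have Hwv : w != v.
  apply/eqP => /(congr1 (fun f : mon n => f k)); rewrite /w mexchE eqxx.
  by rewrite eq_sym (negbTE Hik) /=; lia.
have [Hmin|Hmin] := boolP (ismin gens w).
  exists w; last exact: mdvd_exch_mul.
  split => //; apply/lekeyP; right; split => //; rewrite /gpot Hwd.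
  by case: Hdesc => [H|[H1 H2]]; [left | right; split => //; right; apply: lexlt_mexch].
have [g Hg Hgw] := ismin_below Hw.
have Hgw' : g != w by apply/eqP => E; move: Hmin; rewrite -E Hg.
have Hlt := mdeg_lt Hgw Hgw'.
exists g; last exact: mdvd_trans Hgw (mdvd_exch_mul v i k).
split => //; first by apply/lekeyP; left; rewrite -Hwd.
by apply/eqP => E; move: Hlt; rewrite E Hwd ltnn.
Qed.

Lemma earlier_same_degree c : inI gens c -> mdeg c = mdeg v ->
  Pot blo bhi c < Pot blo bhi v \/ (Pot blo bhi c = Pot blo bhi v /\ lexlt c v) ->
  exists k, v k < c k /\ exists2 g, earlier g & mdvd g (mmul (unitm k) v).
Proof.
move=> HcI Hcd Hbefore.
have [k [i [Hk Hi Hdesc]]] := pot_step (lo_le_hi gens _) Hcd Hbefore.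
have Hik : i != k by apply/eqP => E; move: Hk Hi; rewrite E; lia.
exists k; split => //; apply: (earlier_of_descent (i := i)) => //; first by move: Hi; lia.
exact: strong_exchange Hsep (ismin_inI v_min) HcI erefl Hcd Hi Hk.
Qed.

(* A generator v of positive degree lying above the lower corner of the box
   of I_<deg v - 1> is at distance at least 2 from it: otherwise v / x_l
   would lie in that box, hence in I, for some l. *)
Lemma gpot_ge2 y : 0 < mdeg v -> comp_mem gens (mdeg v).-1 y ->
  (forall j, blo j <= v j) -> 1 < Pot blo bhi v.
Proof.
move=> Hd1 Hy Hlov; rewrite ltnNge; apply/negP => Hp.
have [|l [Hl Hbox]] := drop_into_box (lo_le_hi gens _) Hlov Hp.
  case: (boolP [exists l, blo l < v l]) => [/existsP //|/existsPn Hn].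
  have Hvy : mdvd v y.
    by apply/mdvdP => j; move: (Hn j); rewrite -leqNgt => /leq_trans; apply; apply: lo_le.
  by move: (mdeg_mdvd Hvy); case: Hy => _ ->; lia.
have Hxd := mdeg_mdrop Hl.
have HxI := component_box Hsep Hy Hxd (fun j => proj1 (Hbox j)) (fun j => proj2 (Hbox j)).
by move: Hxd; rewrite (ismin_min v_min HxI (mdvd_mdrop v l)); lia.
Qed.

(* Exchange with an element b of I of smaller degree: b is first lifted to a
   multiple c of degree deg v dividing lcm(b, v). *)
Lemma earlier_lower_degree b : inI gens b -> mdeg b < mdeg v ->
  exists k, v k < b k /\ exists2 g, earlier g & mdvd g (mmul (unitm k) v).
Proof.
move=> HbI Hdeg; have Hd1 : 0 < mdeg v by apply: leq_ltn_trans Hdeg.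
have [c [Hbc Hcm Hcd]] :=
  mdvd_interpolate (mdvd_lcml b v) (ltnW Hdeg) (mdeg_mdvd (mdvd_lcmr b v)).
have HcI := inI_mdvd HbI Hbc.
have [||y [Hby Hyc Hyd]] := @mdvd_interpolate _ _ _ (mdeg v).-1 Hbc;
  try by move: Hdeg Hcd; lia.
have Hy : comp_mem gens (mdeg v).-1 y := conj (inI_mdvd HbI Hby) Hyd.
have Hbk k : v k < c k -> v k < b k.
  by move/mdvdP: Hcm => /(_ k); rewrite mlcmE => Hck Hk; move: Hk Hck; lia.
have Hloc j : blo j <= c j := leq_trans (lo_le j Hy) (mdvdP _ _ Hyc j).
(* c is y, which lies in the box, times one variable *)
have Potc : Pot blo bhi c <= 1.
  have E : \sum_(j < n) y j + \sum_(j < n) (c j - y j) = \sum_(j < n) c j + \sum_(j < n) 0.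
    by apply: sum_pointwise_eq => j; move/mdvdP: Hyc => /(_ j); lia.
  have <- : \sum_(j < n) (c j - y j) = 1 by move: E Hyd Hcd Hd1; rewrite big1_eq /mdeg; lia.
  apply: leq_sum => j _; rewrite /fpot.
  by move: (Hloc j) (hi_ge j Hy) (mdvdP _ _ Hyc j); lia.
case: (boolP [exists k, v k < blo k]) => [/existsP [k Hk] | /existsPn Hn]; last first.
  have Hlov j : blo j <= v j by move: (Hn j); rewrite -leqNgt.
  have [k [Hk Hearlier]] :=
    earlier_same_degree HcI Hcd (or_introl (leq_ltn_trans Potc (gpot_ge2 Hd1 Hy Hlov))).
  by exists k; split => //; apply: Hbk.
(* below the lower corner at k: moving a unit to x_k strictly lowers the potential *)
have Hck : v k < c k := leq_trans Hk (Hloc k).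
have [i Hi] := exists_deficit Hcd Hck.
have Hik : i != k by apply/eqP => E; move: Hk Hi (Hloc i); rewrite E; lia.
have Hvi : 0 < v i by move: Hi; lia.
exists k; split; first exact: Hbk.
apply: (earlier_of_descent (i := i)) => //.
  exact: strong_exchange Hsep (ismin_inI v_min) HcI erefl Hcd Hi Hck.
left; move: (Pot_mexch blo bhi Hik Hvi) (lo_le_hi gens (mdeg v).-1 k) (Hloc i) Hi Hk.
by rewrite /fpot; lia.
Qed.

End Exchange.

Theorem theorem3p8 (n : nat) (gens : seq (mon n)) :
  comp_polymatroidal_SEP (gens_pred gens) ->
  linear_quotients (gens_pred gens).
Proof.
move=> Hsep; apply: (@linear_quotients_of_order _ _ (lekey (gpot gens))).
- exact: lekey_total.
- exact: lekey_trans.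
- exact: lekey_anti.
move=> v b Hv Hb /lekeyP [Hdeg | [Hdeg Hbefore]] Hne.
  exact: (earlier_lower_degree Hsep Hv (ismin_inI Hb) Hdeg).
apply: (earlier_same_degree Hsep Hv (ismin_inI Hb) Hdeg).
move: Hbefore; rewrite /gpot Hdeg => -[H1|[H1 [E|H2]]]; [by left | by case/eqP: Hne | by right].
Qed.
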